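(* For any rooted binary tree $T$ with $n$ leaves, the height of the modified centroid decomposition satisfies $h(\mathit{MCD}(T))\le 2+2\log_2 n$.
   Context: A rooted binary tree is one in which every internal node has exactly two children, a left and a right child. A component of $T$ is a connected set of nodes of $T$, and $|C|$ denotes the number of nodes of a component $C$. An edge of $T$ crosses the boundary of $C$ if exactly one of its endpoints lies in $C$. It is an edge from below if its endpoint in $C$ is the parent endpoint. A centroid of a component $C$ is a node $u\in C$ such that every connected component of $C\setminus\{u\}$ has at most $|C|/2$ nodes. Removing a node $s$ from $C$ leaves at most three connected components: $C_l$ containing the left child of $s$, $C_r$ containing the right child of $s$, and $C_p$ containing the parent of $s$, each intersected with $C$ and possibly empty. The modified centroid decomposition $\mathit{MCD}(T)$ is a ternary tree built recursively, starting from the component $C=T$. For the current component $C$ a splitting node $s$ is chosen. If $C$ has no edge from below, $s$ is a centroid $c$ of $C$. Otherwise $C$ has exactly one edge $(x,y)$ from below with $x\in C$; let $c$ be a centroid of $C$, and let $s$ be the lowest common ancestor of $x$ and $c$. The node of $\mathit{MCD}(T)$ for $C$ stores $s$. Its children are the nodes of $\mathit{MCD}(T)$ for the nonempty components among $C_l,C_r,C_p$ obtained by removing $s$ from $C$. Every component arising this way has at most one edge from below and at most one edge from above. The height $h(\mathit{MCD}(T))$ is the height of this ternary tree. *)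

From mathcomp Require Import all_boot.
Set Implicit Arguments.
Unset Strict Implicit.
Unset Printing Implicit Defensive.

Inductive btree : Type := Leaf | Node of btree & btree.

Fixpoint leaves (t : btree) : nat :=
  match t with Leaf => 1 | Node l r => leaves l + leaves r end.

(** Nodes are addressed by their path from the root
    (false = left child, true = right child); the child of p in
    direction b is rcons p b. *)
Fixpoint nodes (t : btree) : seq (seq bool) :=
  match t with
  | Leaf => [:: [::]]
  | Node l r => [::] :: map (cons false) (nodes l) ++ map (cons true) (nodes r)
  end.

Definition node (T : btree) := seq_sub (nodes T).

Section Tree.
Variable T : btree.

Definition is_child (p : node T) (b : bool) (c : node T) : bool :=
  val c == rcons (val p) b.

Definition parent_of (p c : node T) : bool := is_child p false c || is_child p true c.

Definition tedge (x y : node T) : bool := parent_of x y || parent_of y x.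

Definition restr (D : {set node T}) : rel (node T) :=
  [rel x y | [&& x \in D, y \in D & tedge x y]].

Definition connected (C : {set node T}) : bool :=
  [forall x in C, forall y in C, connect (restr C) x y].

(** the connected component of D containing v (empty if v is not in D) *)
Definition comp (D : {set node T}) (v : node T) : {set node T} :=
  [set w | (v \in D) && connect (restr D) v w].

Definition centroid (C : {set node T}) (u : node T) : bool :=
  (u \in C) && [forall v in C :\ u, 2 * #|comp (C :\ u) v| <= #|C|].

Definition anc (a x : node T) : bool := prefix (val a) (val x).

Definition is_lca (s x y : node T) : bool :=
  [&& anc s x, anc s y & [forall a, (anc a x && anc a y) ==> anc a s]].

(** x is the endpoint in C of an edge (x, y) from below: y is a child of x
    not lying in C *)
Definition from_below (C : {set node T}) (x : node T) : bool :=
  (x \in C) && [exists y, parent_of x y && (y \notin C)].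

Definition split_ok (C : {set node T}) (s : node T) : Prop :=
  exists c, centroid C c /\
    ((forall x, ~~ from_below C x) /\ s = c
     \/ exists x, from_below C x /\ is_lca s x c).

Definition Cl (C : {set node T}) (s : node T) : {set node T} :=
  [set w | [exists v, is_child s false v && (w \in comp (C :\ s) v)]].
Definition Cr (C : {set node T}) (s : node T) : {set node T} :=
  [set w | [exists v, is_child s true v && (w \in comp (C :\ s) v)]].
Definition Cp (C : {set node T}) (s : node T) : {set node T} :=
  [set w | [exists v, parent_of v s && (w \in comp (C :\ s) v)]].

End Tree.

Inductive ttree (A : Type) : Type :=
  TN : A -> option (ttree A) -> option (ttree A) -> option (ttree A) -> ttree A.

(** height = number of edges on a longest root-to-leaf path *)
Fixpoint theight (A : Type) (t : ttree A) : nat :=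
  match t with
  | TN _ a b c =>
    let f o := match o with None => 0 | Some t' => (theight t').+1 end in
    maxn (f a) (maxn (f b) (f c))
  end.

(** t is a valid modified centroid decomposition of the component C of T
    (for some admissible choices of centroids). *)
Fixpoint is_mcd (T : btree) (C : {set node T}) (t : ttree (node T)) {struct t} : Prop :=
  match t with
  | TN s a b c =>
    split_ok C s /\
    match a with None => Cl C s = set0 | Some ta => Cl C s != set0 /\ is_mcd (Cl C s) ta end /\
    match b with None => Cr C s = set0 | Some tb => Cr C s != set0 /\ is_mcd (Cr C s) tb end /\
    match c with None => Cp C s = set0 | Some tc => Cp C s != set0 /\ is_mcd (Cp C s) tc end
  end.

From Stdlib Require Import Reals.

Definition log2R (x : R) : R := (ln x / ln 2)%R.

(* Every component C met in the recursion has at most one edge from below.  By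
   induction on the decomposition, its height h satisfies 2^h <= 2|C|^2, and even
   2^h <= |C|^2 when C has no edge from below.  Indeed a piece P obtained by
   removing the splitting node s has at most |C|/2 nodes when s is the centroid c,
   or when c is not in P (then P lies in one component of C \ c).  Otherwise
   s = lca(x, c) for the edge (x, y) from below of C, and P contains c, so P is
   below a child of s; an edge from below of P could then only be (x, y), which
   would put x and c below that child, contradicting s = lca(x, c).  As T has
   2n - 1 nodes, 2^h <= (2n)^2. *)

From mathcomp Require Import all_boot zify.
From Stdlib Require Import Reals Lra.
(* Reals rebinds [^] on nat to [Nat.pow] and shadows [comp]: import both back. *)
From mathcomp Require Import ssrnat.

Set Implicit Arguments.
Unset Strict Implicit.
Unset Printing Implicit Defensive.

Lemma prefix_rcons_inv (A : eqType) (s t : seq A) x :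
  prefix s (rcons t x) -> s = rcons t x \/ prefix s t.
Proof.
elim: t s => [|a t IH] [|y s] /=; try by right.
- by move=> /andP[/eqP-> hs]; left; case: s hs.
- move=> /andP[/eqP-> /IH[->|h]]; [by left | by right; rewrite /= eqxx h].
Qed.

Lemma connect_invariant (X : finType) (e : rel X) (Q : X -> Prop) v w :
  Q v -> (forall x y, connect e v x -> Q x -> e x y -> Q y) -> connect e v w -> Q w.
Proof.
move=> Qv step /connectP[p vp ->].
suff inv q x : connect e v x -> Q x -> path e x q -> Q (last x q) by exact: inv.
elim: q x => [//|y q IH] x vx Qx /= /andP[exy yq].
exact: IH (connect_trans vx (connect1 exy)) (step _ _ vx Qx exy) yq.
Qed.

Section Components.
Variable T : btree.
Implicit Types (C D : {set node T}) (s v w x y z : node T).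

Lemma parent_of_rcons v s : parent_of v s -> exists b, val s = rcons (val v) b.
Proof. by case/orP=> /eqP h; eexists; exact: h. Qed.

Lemma tedge_rcons x y : tedge x y ->
  (exists b, val y = rcons (val x) b) \/ (exists b, val x = rcons (val y) b).
Proof. by case/orP=> /parent_of_rcons; [left | right]. Qed.

Lemma parent_of_uniq v1 v2 s : parent_of v1 s -> parent_of v2 s -> v1 = v2.
Proof.
move=> /parent_of_rcons[b1 e1] /parent_of_rcons[b2 e2]; apply: val_inj.
by rewrite e1 in e2; case: (rcons_inj e2).
Qed.

Lemma child_nanc_parent s v z : parent_of s v -> anc v z -> ~~ parent_of z s.
Proof.
move=> /parent_of_rcons[b hv]; rewrite /anc hv => /size_prefix vz.
by apply/negP => /parent_of_rcons[b' hs]; move: vz; rewrite hs !size_rcons; lia.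
Qed.

Lemma child_nanc s v : parent_of s v -> ~~ anc v s.
Proof.
move=> /parent_of_rcons[b hv]; apply/negP.
by rewrite /anc hv => /size_prefix; rewrite size_rcons; lia.
Qed.

Lemma comp_subset D v : {subset comp D v <= D}.
Proof.
move=> w; rewrite inE => /andP[vD].
by apply: (@connect_invariant _ _ (fun u => u \in D)) vD _ => x y _ _ /and3P[].
Qed.

Lemma mem_comp_root D v : (v \in comp D v) = (v \in D).
Proof. by rewrite inE connect0 andbT. Qed.

Lemma comp_closed D v y z :
  z \in comp D v -> y \in D -> tedge z y -> y \in comp D v.
Proof.
move=> zP yD ezy; have zD := comp_subset zP.
move: zP; rewrite !inE => /andP[-> vz] /=.
by apply: connect_trans vz (connect1 _); rewrite /restr /= zD yD.
Qed.

Lemma comp_sub_comp D D' v :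
  v \in D' -> {subset comp D v <= D'} -> {subset comp D v <= comp D' v}.
Proof.
move=> vD' sub w wP; move: (wP); rewrite !inE vD' => /andP[vD].
apply: (@connect_invariant _ _ (connect (restr D') v)) (connect0 _ _) _ => x y vx v'x exy.
have vy := connect_trans vx (connect1 exy).
have [xD' yD'] : x \in D' /\ y \in D' by split; apply: sub; rewrite inE vD.
apply: connect_trans v'x (connect1 _); case/and3P: exy => _ _ xy.
by rewrite /restr /= xD' yD' xy.
Qed.

Lemma comp_child_anc C s v w : parent_of s v -> w \in comp (C :\ s) v -> anc v w.
Proof.
move=> /parent_of_rcons[b0 hv]; rewrite inE => /andP[_].
apply: (@connect_invariant _ _ (anc v)) (prefix_refl _) _ => x y _ vx.
case/and3P=> _ /setD1P[ys _] /tedge_rcons[[b hy]|[b hx]].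
  by rewrite /anc hy; apply: prefix_trans vx (prefix_rcons _ _).
move: vx; rewrite /anc hx => /prefix_rcons_inv[|//].
by rewrite hv => /rcons_inj[/val_inj sy _]; rewrite sy eqxx in ys.
Qed.

Lemma comp_parent_nanc C s v w : parent_of v s -> w \in comp (C :\ s) v -> ~~ anc s w.
Proof.
move=> /parent_of_rcons[b0 hs]; rewrite inE => /andP[_].
apply: (@connect_invariant _ _ (fun u => ~~ anc s u)).
  by rewrite /anc hs; apply/negP => /size_prefix; rewrite size_rcons; lia.
move=> x y _ sx /and3P[_ /setD1P[ys _] /tedge_rcons[[b hy]|[b hx]]]; apply/negP.
  rewrite /anc hy => /prefix_rcons_inv[sy|]; last by apply/negP.
  by move: ys; rewrite (val_inj (etrans hy (esym sy))) eqxx.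
by move=> sy; move: sx; rewrite /anc hx (prefix_trans sy (prefix_rcons _ _)).
Qed.

Lemma piece_comp C s P : P \in [:: Cl C s; Cr C s; Cp C s] -> P != set0 ->
  exists2 v, tedge s v & P = comp (C :\ s) v.
Proof.
have piece_of_pred (R : pred (node T)) : (forall v, R v -> tedge s v) ->
    (forall v1 v2, R v1 -> R v2 -> v1 = v2) ->
    [set w | [exists v, R v && (w \in comp (C :\ s) v)]] != set0 ->
    exists2 v, tedge s v & [set w | [exists v, R v && (w \in comp (C :\ s) v)]] = comp (C :\ s) v.
  move=> Rs uR /set0Pn[w]; rewrite inE => /existsP[v /andP[Rv _]].
  exists v; first exact: Rs.
  apply/setP => u; rewrite inE; apply/existsP/idP => [[v' /andP[Rv' hu]]|hu].
    by rewrite -(uR _ _ Rv' Rv).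
  by exists v; rewrite Rv.
have child_uniq b v1 v2 : is_child s b v1 -> is_child s b v2 -> v1 = v2.
  by move=> /eqP e1 /eqP e2; apply: val_inj; rewrite e1 e2.
rewrite !inE => /or3P[] /eqP->; apply: piece_of_pred; try exact: child_uniq.
- by move=> v hv; rewrite /tedge /parent_of hv.
- by move=> v hv; rewrite /tedge /parent_of hv orbT.
- by move=> v hv; rewrite /tedge hv orbT.
- by move=> v1 v2; apply: parent_of_uniq.
Qed.

Definition no_from_below C := forall x, ~~ from_below C x.
Definition unique_from_below C := forall x z, from_below C x -> from_below C z -> x = z.

Lemma no_from_below_unique C : no_from_below C -> unique_from_below C.
Proof. by move=> nfb x z; rewrite (negbTE (nfb x)). Qed.

Lemma no_from_below_setT : no_from_below [set: node T].
Proof. by move=> x; apply/negP => /andP[_ /existsP[y]]; rewrite inE andbF. Qed.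

Lemma from_below_comp C s v z : tedge s v -> from_below (comp (C :\ s) v) z ->
  from_below C z \/ parent_of v s /\ parent_of z s.
Proof.
move=> sv /andP[zP /existsP[y /andP[zy yP]]].
have /setD1P[_ zC] := comp_subset zP.
have [yC|yC] := boolP (y \in C); last first.
  by left; rewrite /from_below zC; apply/existsP; exists y; rewrite zy.
have [eys|nys] := eqVneq y s; last first.
  by rewrite (comp_closed zP) ?inE ?nys // /tedge zy in yP.
subst y; case/orP: sv => [sv|vs]; last by right.
by rewrite (negbTE (child_nanc_parent sv (comp_child_anc sv zP))) in zy.
Qed.

Section Pieces.
Variables (C : {set node T}) (s v : node T).
Hypotheses (uC : unique_from_below C) (split_s : split_ok C s) (sv : tedge s v).
Let P := comp (C :\ s) v.

Lemma from_below_piece z : from_below P z ->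
  parent_of v s /\ parent_of z s \/ ~~ parent_of v s /\ from_below C z.
Proof.
move=> zfb; have zP : z \in P by case/andP: zfb.
have [zC|[vs zs]] := from_below_comp sv zfb; last by left.
right; split=> //; apply/negP => vs.
have [c [_ [[nfb _]|[x [xfb sxc]]]]] := split_s; first by move: (nfb z); rewrite zC.
have zx := uC zC xfb; subst x.
by case/and3P: sxc; rewrite (negbTE (comp_parent_nanc vs zP)).
Qed.

Lemma unique_from_below_piece : unique_from_below P.
Proof.
move=> z1 z2 /from_below_piece[[vs p1]|[nvs f1]] /from_below_piece[[vs' p2]|[nvs' f2]].
- exact: parent_of_uniq p1 p2.
- by rewrite vs in nvs'.
- by rewrite vs' in nvs.
- exact: uC.
Qed.

Lemma card_piece : P != set0 ->
  2 * #|P| <= #|C| \/ ~ no_from_below C /\ no_from_below P.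
Proof.
move=> P0; have vP : v \in P.
  by case/set0Pn: P0 => w; rewrite inE => /andP[vD _]; rewrite mem_comp_root.
have PC : {subset P <= C} by move=> w /comp_subset /setD1P[].
have [c [/andP[_ /forallP cent] [[_ sc]|[x [xfb sxc]]]]] := split_s.
  by left; subst s; apply: (implyP (cent v)); apply: comp_subset vP.
have [cP|cP] := boolP (c \in P); last first.
  have vCc : v \in C :\ c by rewrite in_setD1 (PC _ vP) andbT; apply: contraNneq cP => <-.
  have sub : {subset P <= comp (C :\ c) v}.
    apply: comp_sub_comp vCc _ => w wP; rewrite in_setD1 (PC _ wP) andbT.
    by apply: contraNneq cP => <-.
  left; apply: leq_trans ((implyP (cent v)) vCc).
  by rewrite leq_mul2l subset_leq_card ?orbT //; apply/subsetP.
right; split=> [nfb|z]; first by move: (nfb x); rewrite xfb.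
apply/negP => zfb; have zP : z \in P by case/andP: zfb.
have [[vs _]|[nvs zC]] := from_below_piece zfb.
  by case/and3P: sxc => _; rewrite (negbTE (comp_parent_nanc vs cP)).
have zx := uC zC xfb; subst z.
have sv' : parent_of s v by case/orP: (sv) nvs => [-> | ->].
case/and3P: sxc => _ _ /forallP/(_ v)/implyP.
rewrite (comp_child_anc sv' zP) (comp_child_anc sv' cP) => /(_ isT).
exact/negP/child_nanc.
Qed.

End Pieces.
End Components.

Definition oheight (A : Type) (o : option (ttree A)) : nat :=
  if o is Some t then (theight t).+1 else 0.

Lemma theight_TN (A : Type) (a : A) o1 o2 o3 :
  theight (TN a o1 o2 o3) = maxn (oheight o1) (maxn (oheight o2) (oheight o3)).
Proof. by []. Qed.

Lemma expn_max_le b m n k : b ^ m <= k -> b ^ n <= k -> b ^ maxn m n <= k.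
Proof. by rewrite /maxn; case: ifP. Qed.

Lemma mcd_height_bound (T : btree) (C : {set node T}) t :
  unique_from_below C -> is_mcd C t ->
  2 ^ theight t <= 2 * #|C| ^ 2 /\ (no_from_below C -> 2 ^ theight t <= #|C| ^ 2).
Proof.
have [k] := ubnP (theight t).
elim: k C t => [//|k IH] C [s a b c] ht uC [split_s [ha [hb hc]]].
have C_gt0 : 0 < #|C|.
  by case: split_s => c0 [/andP[c0C _] _]; apply/card_gt0P; exists c0.
have child o P : P \in [:: Cl C s; Cr C s; Cp C s] -> oheight o <= k ->
    (if o is Some t' then P != set0 /\ is_mcd P t' else P = set0) ->
    2 ^ oheight o <= 2 * #|C| ^ 2 /\ (no_from_below C -> 2 ^ oheight o <= #|C| ^ 2).
  case: o => [t'|] /= Ppiece hk; last by rewrite expn0 muln_gt0 expn_gt0 C_gt0.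
  case=> P0 mcdP; have [v sv eP] := piece_comp Ppiece P0; rewrite {Ppiece}eP in P0 mcdP.
  have [IH2 IH1] := IH _ _ hk (unique_from_below_piece uC split_s sv) mcdP.
  have PC : #|comp (C :\ s) v| <= #|C|.
    by apply/subset_leq_card/subsetP => w /comp_subset/setD1P[].
  have := card_piece uC split_s sv P0; rewrite expnS.
  move: IH2 IH1 PC; set p := #|_|; set m := #|C|; set E := 2 ^ _.
  move=> IH2 IH1 PC [half|[nfbC nfbP]]; first by split=> [|_]; nia.
  by split=> [|/nfbC//]; have := IH1 nfbP; nia.
move: ht; rewrite theight_TN ltnS !geq_max => /and3P[ka kb kc].
have [a2 a1] := child a _ (mem_head _ _) ka ha.
have := child b (Cr C s); rewrite !inE eqxx orbT => /(_ isT kb hb)[b2 b1].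
have := child c (Cp C s); rewrite !inE eqxx !orbT => /(_ isT kc hc)[c2 c1].
by split=> [|nfb]; do !apply: expn_max_le; auto.
Qed.

Lemma leaves_gt0 (T : btree) : 0 < leaves T.
Proof. by elim: T => //= l IHl r IHr; rewrite addn_gt0 IHl. Qed.

Lemma size_nodes_lt (T : btree) : size (nodes T) < 2 * leaves T.
Proof. by elim: T => //= l IHl r IHr; rewrite size_cat !size_map; lia. Qed.

Lemma card_node_lt (T : btree) : #|{: node T}| < 2 * leaves T.
Proof.
apply: leq_ltn_trans (size_nodes_lt T); rewrite cardE -(size_map val).
apply: uniq_leq_size; first by rewrite (map_inj_uniq val_inj) enum_uniq.
by move=> _ /mapP[y _ ->]; exact: valP.
Qed.

Lemma INR_expn (m n : nat) : INR (m ^ n) = (INR m ^ n)%R.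
Proof. by elim: n => [//|n IH]; rewrite expnS mult_INR IH. Qed.

Lemma INR_le_log2R (h m : nat) : 0 < m -> 2 ^ h <= m -> (INR h <= log2R (INR m))%R.
Proof.
move=> m_gt0 hm.
have ln2_gt0 : (0 < ln 2)%R by have := ln_lt_2; lra.
have pow_le : (2 ^ h <= INR m)%R.
  by rewrite -[2%R]/(INR 2) -INR_expn; apply/le_INR/leP.
apply: (Rmult_le_reg_r (ln 2)) => //.
have -> : (log2R (INR m) * ln 2 = ln (INR m))%R by rewrite /log2R; field; lra.
rewrite -ln_pow; last lra.
have [lt|->] := Rle_lt_or_eq_dec _ _ pow_le; last lra.
by apply/Rlt_le/ln_increasing => //; apply: pow_lt; lra.
Qed.

Lemma log2R_4sq (x : R) : (0 < x)%R -> log2R (4 * (x * x)) = (2 + 2 * log2R x)%R.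
Proof.
move=> x_gt0; have ln2_gt0 : (0 < ln 2)%R by have := ln_lt_2; lra.
rewrite /log2R (_ : 4 = 2 * 2)%R; last lra.
rewrite !ln_mult //; try lra; last by apply: Rmult_lt_0_compat.
by field; lra.
Qed.

Theorem lemma2 (T : btree) (t : ttree (node T)) :
  is_mcd [set: node T] t ->
  (INR (theight t) <= 2 + 2 * log2R (INR (leaves T)))%R.
Proof.
move=> mcd; have nfbT := @no_from_below_setT T.
have [_ /(_ nfbT)] := mcd_height_bound (no_from_below_unique nfbT) mcd.
rewrite cardsT => hT.
have n_gt0 := leaves_gt0 T; have card_le := ltnW (card_node_lt T).
rewrite -log2R_4sq; last exact/lt_0_INR/ltP.
have -> : (4 * (INR (leaves T) * INR (leaves T)))%R = INR (2 * leaves T * (2 * leaves T)).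
  by rewrite !mult_INR /=; lra.
apply: INR_le_log2R; first by rewrite !muln_gt0 n_gt0.
by apply: leq_trans hT _; rewrite -mulnn leq_mul.
Qed.
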